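(* Let $C, C'$ be programs of the probabilistic guarded command language $\mathsf{pGCL}$ and let $f \in \mathbb{E}$ be an expectation. If $C'$ implements $C$ (i.e. $C' \multimap C$), then $$\mathrm{dwp}[\![C]\!](f) \le \mathrm{dwp}[\![C']\!](f) \qquad\text{and}\qquad \mathrm{awp}[\![C]\!](f) \ge \mathrm{awp}[\![C']\!](f),$$ where $\le,\ge$ are the pointwise orders on expectations.
   Context: States: fix a countably infinite set of program variables with values in $\mathbb{Q}_{\ge 0}$; a state is a map $\sigma$ from variables to $\mathbb{Q}_{\ge0}$ which is $0$ for all but finitely many variables; $\mathsf{States}$ is the set of states. A predicate is a map $\varphi:\mathsf{States}\to\{\mathsf{true},\mathsf{false}\}$; $\varphi\models\psi$ (entailment) means every state satisfying $\varphi$ satisfies $\psi$, and $\models\varphi$ means $\varphi$ holds in every state. Expectations: $\mathbb{E}$ is the set of maps $\mathsf{States}\to[0,\infty]$, ordered pointwise ($f\le g$ iff $f(\sigma)\le g(\sigma)$ for all $\sigma$), a complete lattice; $+,\cdot$ are pointwise with $0\cdot\infty=\infty\cdot 0=0$; $f\sqcap g$ and $f\sqcup g$ are pointwise minimum and maximum; $[\varphi]$ is the Iverson bracket ($1$ where $\varphi$ holds, $0$ elsewhere); $(\varphi\to g)(\sigma)=g(\sigma)$ if $\sigma\models\varphi$ and $\infty$ otherwise; $f[x/E](\sigma)=f(\sigma[x\mapsto E(\sigma)])$. Programs $C$ of $\mathsf{pGCL}$: $C ::= \mathtt{skip} \mid x:=E \mid C;C \mid \mathtt{if}\ \varphi_1\to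 C\ \square\ \varphi_2\to C \mid \{C\}[p]\{C\} \mid \mathtt{while}(\varphi)\{C\}$, where $E:\mathsf{States}\to\mathbb{Q}_{\ge0}$, $p:\mathsf{States}\to[0,1]$, predicates $\varphi,\varphi_i$, and in every guarded choice $\varphi_1\vee\varphi_2$ must be valid (if both guards hold the choice is nondeterministic). Each loop carries an invariant annotation $I\in\mathbb{E}$. Weakest preexpectations, defined by induction on $C$ (for $\mathcal{T}\in\{\mathrm{dwp},\mathrm{awp}\}$): $\mathcal{T}[\![\mathtt{skip}]\!](f)=f$; $\mathcal{T}[\![x:=E]\!](f)=f[x/E]$; $\mathcal{T}[\![C_1;C_2]\!](f)=\mathcal{T}[\![C_1]\!](\mathcal{T}[\![C_2]\!](f))$; $\mathrm{dwp}[\![\mathtt{if}\ \varphi_1\to C_1\ \square\ \varphi_2\to C_2]\!](f)=(\varphi_1\to\mathrm{dwp}[\![C_1]\!](f))\sqcap(\varphi_2\to\mathrm{dwp}[\![C_2]\!](f))$; $\mathrm{awp}[\![\mathtt{if}\ \varphi_1\to C_1\ \square\ \varphi_2\to C_2]\!](f)=[\varphi_1]\cdot\mathrm{awp}[\![C_1]\!](f)\sqcup[\varphi_2]\cdot\mathrm{awp}[\![C_2]\!](f)$; $\mathcal{T}[\![\{C_1\}[p]\{C_2\}]\!](f)=p\cdot\mathcal{T}[\![C_1]\!](f)+(1-p)\cdot\mathcal{T}[\![C_2]\!](f)$; $\mathcal{T}[\![\mathtt{while}(\varphi)\{C'\}]\!](f)$ is the least fixpoint (in $(\mathbb{E},\le)$)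 of $g\mapsto[\neg\varphi]\cdot f+[\varphi]\cdot\mathcal{T}[\![C']\!](g)$. Implementation relation: $\multimap$ is the smallest partial order on $\mathsf{pGCL}$ closed under: if $C_1'\multimap C_1$ and $C_2'\multimap C_2$ then $C_1';C_2'\multimap C_1;C_2$ and $\{C_1'\}[p]\{C_2'\}\multimap\{C_1\}[p]\{C_2\}$; if moreover $\varphi_1'\models\varphi_1$, $\varphi_2'\models\varphi_2$ and $\models\varphi_1'\vee\varphi_2'$, then $\mathtt{if}\ \varphi_1'\to C_1'\ \square\ \varphi_2'\to C_2'\multimap\mathtt{if}\ \varphi_1\to C_1\ \square\ \varphi_2\to C_2$; if $C'\multimap C$ then $\mathtt{while}(\varphi)\{C'\}\multimap\mathtt{while}(\varphi)\{C\}$. *)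

From HB Require Import structures.
From mathcomp Require Import all_boot all_order all_algebra.
From mathcomp Require Import all_classical all_reals.
From mathcomp Require Import ereal.
Set Implicit Arguments. Unset Strict Implicit. Unset Printing Implicit Defensive.
Import Order.TTheory GRing.Theory Num.Theory.
Local Open Scope ring_scope.
Local Open Scope classical_set_scope.

Definition var := nat.

Definition qnn := {q : rat | 0 <= q}.

Record state := State {
  sfun : var -> qnn ;
  sfin : exists N : nat, forall x : var, (N <= x)%N -> val (sfun x) = 0 }.

Lemma qnn0_proof : (0 : rat) <= 0. Proof. by []. Qed.

Lemma upd_fin (s : state) (x : var) (v : qnn) :
  exists N : nat, forall y : var, (N <= y)%N ->
    val (if y == x then v else sfun s y) = 0.
Proof.
case: (sfin s) => N HN; exists (maxn N x.+1) => y Hy.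
have Hxy : (y == x) = false.
  by apply/eqP => Exy; move: Hy; rewrite Exy geq_max ltnn andbF.
by rewrite Hxy; apply: HN; move: Hy; rewrite geq_max => /andP[].
Qed.

Definition upd (s : state) (x : var) (v : qnn) : state :=
  @State (fun y => if y == x then v else sfun s y) (upd_fin s x v).

Definition pred_st := state -> bool.
Definition entails (phi psi : pred_st) : Prop := forall s, phi s -> psi s.
Definition valid (phi : pred_st) : Prop := forall s, phi s.

Definition aexp := state -> qnn.

Section Sem.
Variable R : realType.
Local Open Scope ereal_scope.

Definition prob := {p : state -> R | forall s, (0 <= p s <= 1)%R}.

(** Expectations: maps States -> [0, +oo]; represented in \bar R, the
    set E being the nonnegative ones. *)
Definition expect := state -> \bar R.
Definition is_expect (f : expect) : Prop := forall s, 0 <= f s.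

(** pGCL syntax. Guarded choice carries a proof that [phi1 \/ phi2] is valid;
    loops carry an invariant annotation. *)
Inductive pgcl : Type :=
| Skip : pgcl
| Assign : var -> aexp -> pgcl
| Seq : pgcl -> pgcl -> pgcl
| If : forall (phi1 phi2 : pred_st), valid (fun s => phi1 s || phi2 s) ->
       pgcl -> pgcl -> pgcl
| PChoice : pgcl -> prob -> pgcl -> pgcl
| While : pred_st -> expect -> pgcl -> pgcl.

Definition iv (b : bool) : \bar R := if b then 1 else 0.

Definition guardE (phi : pred_st) (g : expect) : expect :=
  fun s => if phi s then g s else +oo.

(** Least fixpoint in (E, <=) of a map on expectations (Knaster-Tarski):
    the pointwise infimum of all prefixed points lying in E. *)
Definition lfp (Phi : expect -> expect) : expect :=
  fun s => ereal_inf [set g s | g in [set g : expect | is_expect g /\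
                                       (forall t, Phi g t <= g t)]].

Definition loopF (phi : pred_st) (body : expect -> expect) (f : expect)
  : expect -> expect :=
  fun g s => iv (~~ phi s) * f s + iv (phi s) * body g s.

Fixpoint dwp (C : pgcl) (f : expect) {struct C} : expect :=
  match C with
  | Skip => f
  | Assign x E => fun s => f (upd s x (E s))
  | Seq C1 C2 => dwp C1 (dwp C2 f)
  | If phi1 phi2 _ C1 C2 =>
      fun s => mine (guardE phi1 (dwp C1 f) s) (guardE phi2 (dwp C2 f) s)
  | PChoice C1 p C2 =>
      fun s => ((sval p s)%:E * dwp C1 f s + (1 - sval p s)%:E * dwp C2 f s)
  | While phi _ C' => lfp (loopF phi (dwp C') f)
  end.

Fixpoint awp (C : pgcl) (f : expect) {struct C} : expect :=
  match C with
  | Skip => f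
  | Assign x E => fun s => f (upd s x (E s))
  | Seq C1 C2 => awp C1 (awp C2 f)
  | If phi1 phi2 _ C1 C2 =>
      fun s => maxe (iv (phi1 s) * awp C1 f s) (iv (phi2 s) * awp C2 f s)
  | PChoice C1 p C2 =>
      fun s => ((sval p s)%:E * awp C1 f s + (1 - sval p s)%:E * awp C2 f s)
  | While phi _ C' => lfp (loopF phi (awp C') f)
  end.

(** The implementation relation C' -o C (first argument implements second):
    the reflexive-transitive closure of the congruence rules, i.e. the
    smallest preorder (partial order) closed under them. *)
Inductive implements : pgcl -> pgcl -> Prop :=
| impl_refl C : implements C C
| impl_trans C1 C2 C3 : implements C1 C2 -> implements C2 C3 -> implements C1 C3
| impl_seq C1' C2' C1 C2 :
    implements C1' C1 -> implements C2' C2 ->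
    implements (Seq C1' C2') (Seq C1 C2)
| impl_pchoice C1' C2' C1 C2 p :
    implements C1' C1 -> implements C2' C2 ->
    implements (PChoice C1' p C2') (PChoice C1 p C2)
| impl_if C1' C2' C1 C2 (phi1' phi2' phi1 phi2 : pred_st) h' h :
    implements C1' C1 -> implements C2' C2 ->
    entails phi1' phi1 -> entails phi2' phi2 ->
    implements (@If phi1' phi2' h' C1' C2') (@If phi1 phi2 h C1 C2)
| impl_while C' C phi I :
    implements C' C -> implements (While phi I C') (While phi I C).

End Sem.

From mathcomp Require Import all_boot all_order all_algebra.
From mathcomp Require Import all_classical all_reals.
From mathcomp Require Import ereal.
Import Order.TTheory GRing.Theory Num.Theory.
Local Open Scope ereal_scope.

(* Both transformers are monotone in
   the postexpectation (this handles sequencing), and the least fixpoint is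
   monotone in its functional on E (this handles loops). Strengthening the
   guards of a choice replaces branches of the demonic minimum by [+oo], which
   can only raise dwp, and replaces branches of the angelic maximum by [0],
   which can only lower awp as long as the expectations are nonnegative. *)

Section Refinement.
Variable R : realType.
Implicit Types (f g : expect R) (Phi : expect R -> expect R).

Lemma iv_ge0 (b : bool) : 0 <= iv R b.
Proof. by case: b. Qed.

Lemma prob_ge0 (p : prob R) s : 0 <= (sval p s)%:E.
Proof. by rewrite lee_fin; case/andP: (svalP p s). Qed.

Lemma prob_compl_ge0 (p : prob R) s : 0 <= (1 - sval p s)%:E.
Proof. by rewrite lee_fin subr_ge0; case/andP: (svalP p s). Qed.

Lemma lfp_ge0 Phi s : 0 <= lfp Phi s.
Proof. by apply: le_ereal_inf_tmp => _ [g [g_ge0 _] <-]. Qed.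

Lemma le_lfp Phi1 Phi2 :
  (forall g, is_expect g -> forall t, Phi1 g t <= Phi2 g t) ->
  forall s, lfp Phi1 s <= lfp Phi2 s.
Proof.
move=> le_Phi s; apply: ereal_inf_le_tmp => _ [g [g_ge0 Phi2g_le] <-].
exists g => //; split => // t; exact: le_trans (le_Phi g g_ge0 t) (Phi2g_le t).
Qed.

Lemma le_loopF phi (body1 body2 : expect R -> expect R) f1 f2 g s :
  (forall s, f1 s <= f2 s) -> (forall s, body1 g s <= body2 g s) ->
  loopF phi body1 f1 g s <= loopF phi body2 f2 g s.
Proof. by move=> le_f le_body; apply: leeD; apply: lee_wpmul2l; rewrite ?iv_ge0. Qed.

Lemma le_guardE (phi phi' : pred_st) g g' s :
  entails phi' phi -> (forall s, g s <= g' s) ->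
  guardE phi g s <= guardE phi' g' s.
Proof.
rewrite /guardE => phi'_phi le_g; case phi's: (phi' s); last exact: leey.
by rewrite (phi'_phi s phi's).
Qed.

Lemma le_ivM (b b' : bool) (x y : \bar R) :
  (b' -> b) -> 0 <= y -> x <= y -> iv R b' * x <= iv R b * y.
Proof.
case: b' => [/(_ isT) -> _|_ y_ge0 _]; first by rewrite /iv !mul1e.
by rewrite /iv mul0e mule_ge0 ?iv_ge0.
Qed.

Lemma awp_ge0 C f : is_expect f -> is_expect (awp C f).
Proof.
elim: C f => [|x E|C1 IH1 C2 IH2|phi1 phi2 _ C1 IH1 C2 IH2|C1 IH1 p C2 IH2|phi I C IH]
  f f_ge0 s /=.
- exact: f_ge0.
- exact: f_ge0.
- exact/IH1/IH2.
- by rewrite le_max mule_ge0 ?iv_ge0 ?IH1.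
- by rewrite adde_ge0 ?mule_ge0 ?prob_ge0 ?prob_compl_ge0 ?IH1 ?IH2.
- exact: lfp_ge0.
Qed.

Lemma dwp_mono C f g : (forall s, f s <= g s) -> forall s, dwp C f s <= dwp C g s.
Proof.
elim: C f g => [|x E|C1 IH1 C2 IH2|phi1 phi2 _ C1 IH1 C2 IH2|C1 IH1 p C2 IH2|phi I C IH]
  f g le_fg s /=.
- exact: le_fg.
- exact: le_fg.
- exact/IH1/IH2.
- by apply: le_min2; apply: le_guardE => //; [exact: IH1|exact: IH2].
- by apply: leeD; apply: lee_wpmul2l; rewrite ?prob_ge0 ?prob_compl_ge0 ?IH1 ?IH2.
- by apply: le_lfp => h _ t; apply: le_loopF.
Qed.

Lemma awp_mono C f g : (forall s, f s <= g s) -> forall s, awp C f s <= awp C g s.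
Proof.
elim: C f g => [|x E|C1 IH1 C2 IH2|phi1 phi2 _ C1 IH1 C2 IH2|C1 IH1 p C2 IH2|phi I C IH]
  f g le_fg s /=.
- exact: le_fg.
- exact: le_fg.
- exact/IH1/IH2.
- by apply: le_max2; apply: lee_wpmul2l; rewrite ?iv_ge0 ?IH1 ?IH2.
- by apply: leeD; apply: lee_wpmul2l; rewrite ?prob_ge0 ?prob_compl_ge0 ?IH1 ?IH2.
- by apply: le_lfp => h _ t; apply: le_loopF.
Qed.

Lemma dwp_implements C C' : implements C' C -> forall f s, dwp C f s <= dwp C' f s.
Proof.
elim=> {C C'} /=.
- by [].
- by move=> C1 C2 C3 _ IH12 _ IH23 f s; exact: le_trans (IH23 f s) (IH12 f s).
- move=> C1' C2' C1 C2 _ IH1 _ IH2 f s.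
  by apply: le_trans (IH1 _ s); apply: dwp_mono.
- by move=> C1' C2' C1 C2 p _ IH1 _ IH2 f s; apply: leeD; apply: lee_wpmul2l;
    rewrite ?prob_ge0 ?prob_compl_ge0.
- move=> C1' C2' C1 C2 phi1' phi2' phi1 phi2 _ _ _ IH1 _ IH2 phi1'_phi1 phi2'_phi2 f s.
  apply: le_min2; apply: le_guardE.
  + exact: phi1'_phi1.
  + exact: IH1.
  + exact: phi2'_phi2.
  + exact: IH2.
- by move=> C' C phi I _ IH f; apply: le_lfp => g _ t; apply: le_loopF.
Qed.

Lemma awp_implements C C' : implements C' C ->
  forall f, is_expect f -> forall s, awp C' f s <= awp C f s.
Proof.
elim=> {C C'} /=.
- by [].
- move=> C1 C2 C3 _ IH12 _ IH23 f f_ge0 s.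
  exact: le_trans (IH12 f f_ge0 s) (IH23 f f_ge0 s).
- move=> C1' C2' C1 C2 _ IH1 _ IH2 f f_ge0 s.
  apply: le_trans (IH1 _ (awp_ge0 C2' f f_ge0) s) _.
  by apply: awp_mono; apply: IH2.
- by move=> C1' C2' C1 C2 p _ IH1 _ IH2 f f_ge0 s; apply: leeD; apply: lee_wpmul2l;
    rewrite ?prob_ge0 ?prob_compl_ge0 ?IH1 ?IH2.
- move=> C1' C2' C1 C2 phi1' phi2' phi1 phi2 _ _ _ IH1 _ IH2 phi1'_phi1 phi2'_phi2 f f_ge0 s.
  apply: le_max2; apply: le_ivM; rewrite ?awp_ge0 ?IH1 ?IH2 //.
  + exact: phi1'_phi1.
  + exact: phi2'_phi2.
- move=> C' C phi I _ IH f f_ge0.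
  by apply: le_lfp => g g_ge0 t; apply: le_loopF => // u; apply: IH.
Qed.

End Refinement.

Theorem lemma4p3 (R : realType) (C C' : pgcl R) (f : state -> \bar R) :
  (forall s, 0 <= f s) ->
  implements C' C ->
  (forall s, dwp C f s <= dwp C' f s) /\ (forall s, awp C' f s <= awp C f s).
Proof.
move=> f_ge0 C'_C; split; first exact: dwp_implements.
exact: awp_implements.
Qed.
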